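(* Let $G=(\mathcal{X},\mathcal{E})$ be a (simple, undirected) graph on a finite vertex set and $P$ a pmf on $\mathcal{X}$. Then $I_2(G,P)\le H_2(G,P)$.
   Context: $\log$ is base 2. $I_2(G,P):=-\log\sum_{(x,x')\in\mathcal{X}^2:\,\{x,x'\}\notin\mathcal{E}}P(x)P(x')$ (pairs with $x=x'$ are included, since singletons are never edges). Let $\mathcal{Y}\subseteq2^{\mathcal{X}}$ be the set of maximal independent sets of $G$, and let $\Delta(G,P)$ be the set of pmfs $P(x,y)$ on $\mathcal{X}\times\mathcal{Y}$ whose $\mathcal{X}$-marginal is $P$ and with $\sum_{(x,y):x\in y}P(x,y)=1$; write $P(y)$ for the $\mathcal{Y}$-marginal. Define $H_2(G,P):=\min_{P(x,y)\in\Delta(G,P)}\Big(-\log\sum_{(x,y):x\in y}P(x)P(y)\Big)$. *)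

From mathcomp Require Import all_boot.
From Stdlib Require Import Reals.
Set Implicit Arguments. Unset Strict Implicit. Unset Printing Implicit Defensive.

Local Open Scope R_scope.

Definition log2 (x : R) : R := ln x / ln 2.

Section Defs.
Variable X : finType.
(* simple undirected graph: e symmetric and irreflexive (hypotheses in the theorem) *)
Variable e : rel X.

Definition is_pmf (P : X -> R) : Prop :=
  (forall x, 0 <= P x) /\ \big[Rplus/0]_(x : X) P x = 1.

Definition independent (S : {set X}) : bool :=
  [forall x in S, forall x' in S, ~~ e x x'].
Definition max_indep (S : {set X}) : bool := maxset independent S.

Definition I2 (P : X -> R) : R :=
  - log2 (\big[Rplus/0]_(x : X) \big[Rplus/0]_(x' : X | ~~ e x x') (P x * P x')).

(* joint pmf Q(x,y) on X x Y, Y = maximal independent sets; represented as a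
   function on X * {set X} vanishing outside X x Y *)
Definition in_Delta (P : X -> R) (Q : X -> {set X} -> R) : Prop :=
  (forall x y, 0 <= Q x y) /\
  (forall x y, ~~ max_indep y -> Q x y = 0) /\
  (forall x, \big[Rplus/0]_(y : {set X} | max_indep y) Q x y = P x) /\
  \big[Rplus/0]_(x : X) \big[Rplus/0]_(y : {set X} | max_indep y && (x \in y)) Q x y = 1.

Definition margY (Q : X -> {set X} -> R) (y : {set X}) : R :=
  \big[Rplus/0]_(x : X) Q x y.

(* objective minimised in the definition of H_2(G,P) *)
Definition H2_obj (P : X -> R) (Q : X -> {set X} -> R) : R :=
  - log2 (\big[Rplus/0]_(x : X) \big[Rplus/0]_(y : {set X} | max_indep y && (x \in y))
            (P x * margY Q y)).

End Defs.

(* Every maximal independent set y containing x lies in the non-neighbourhood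
   of x, and the joint pmf Q puts no mass on pairs with x outside y.  Hence the
   Y-marginal Q(y) is bounded by the mass of the non-neighbours of x, and
   summing over y ∋ x and then over y gives
     sum_{x in y} P(x) Q(y) <= sum_{x, x' non-adjacent} P(x) P(x').
   The left-hand side is positive because Q(x,y)^2 <= P(x) Q(y), so the
   inequality survives the decreasing map t |-> -log t. *)
From mathcomp Require Import all_boot all_order all_algebra.
From Stdlib Require Import Reals Lra.
From mathcomp Require Import Rstruct.

Set Implicit Arguments. Unset Strict Implicit. Unset Printing Implicit Defensive.
Import Order.TTheory GRing.Theory Num.Theory.

Local Open Scope ring_scope.

Lemma ler_sum_term (R : numDomainType) (I : finType) (P : pred I) (F : I -> R) i :
  (forall j, P j -> 0 <= F j) -> P i -> F i <= \sum_(j | P j) F j.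
Proof.
move=> F_ge0 Pi; rewrite (bigD1 i) //= lerDl sumr_ge0 // => j /andP[Pj _].
exact: F_ge0.
Qed.

Lemma max_indep_nonadjacent (X : finType) (e : rel X) (y : {set X}) x x' :
  max_indep e y -> x \in y -> x' \in y -> ~~ e x x'.
Proof.
by move=> /maxsetp /forall_inP /(_ x) yI xy x'y; move/forall_inP: (yI xy); apply.
Qed.

Section Delta.
Variables (R : realDomainType) (X : finType) (e : rel X).
Variables (P : X -> R) (Q : X -> {set X} -> R).
Hypothesis P_sum1 : \sum_x P x = 1.
Hypothesis Q_ge0 : forall x y, 0 <= Q x y.
Hypothesis Q_margX : forall x, \sum_(y | max_indep e y) Q x y = P x.
Hypothesis Q_mass : \sum_x \sum_(y | max_indep e y && (x \in y)) Q x y = 1.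

(* The pairs with [x \in y] already carry mass 1 = sum of P, so the others carry none. *)
Lemma Delta_support x y : max_indep e y -> x \notin y -> Q x y = 0.
Proof.
have out0 : \sum_x \sum_(y | max_indep e y && (x \notin y)) Q x y = 0.
  have split_margX z : P z = \sum_(y | max_indep e y && (z \in y)) Q z y
                           + \sum_(y | max_indep e y && (z \notin y)) Q z y.
    by rewrite -Q_margX (bigID (fun y : {set X} => z \in y)).
  apply: (@addrI _ 1); rewrite addr0 -{1}Q_mass -big_split /= -P_sum1.
  by apply: eq_bigr => z _; rewrite split_margX.
move=> miy xy; apply: (psumr_eq0P _ (psumr_eq0P _ out0 isT)); last by rewrite miy.
  by move=> ? _; exact: Q_ge0.
by move=> ? _; apply: sumr_ge0 => ? _; exact: Q_ge0.
Qed.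

Lemma Delta_le_margX x y : max_indep e y -> Q x y <= P x.
Proof. by rewrite -Q_margX; apply: ler_sum_term => ? _. Qed.

Lemma Delta_le_margY x y : Q x y <= \sum_z Q z y.
Proof. exact: (@ler_sum_term _ _ predT (Q^~ y)). Qed.

Lemma margY_nonadjacent x y : max_indep e y -> x \in y ->
  \sum_z Q z y = \sum_(x' | ~~ e x x') Q x' y.
Proof.
move=> miy xy; rewrite (bigID (fun x' => ~~ e x x')) /= addrC big1 ?add0r //.
move=> x' /negbNE exx'; apply: Delta_support => //; apply: contraL exx'.
exact: max_indep_nonadjacent.
Qed.

Lemma H2_sum_le_I2_sum :
  \sum_x \sum_(y | max_indep e y && (x \in y)) P x * \sum_z Q z y <=
  \sum_x \sum_(x' | ~~ e x x') P x * P x'.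
Proof.
apply: ler_sum => x _.
have PQ_ge0 y : 0 <= \sum_(x' | ~~ e x x') P x * Q x' y.
  apply: sumr_ge0 => x' _; apply: mulr_ge0; last exact: Q_ge0.
  by rewrite -Q_margX sumr_ge0.
apply: (@le_trans _ _ (\sum_(y | max_indep e y) \sum_(x' | ~~ e x x') P x * Q x' y)).
  rewrite [leRHS](bigID (fun y : {set X} => x \in y)) /= -[leLHS]addr0 lerD ?sumr_ge0 //.
  apply: ler_sum => y /andP[miy xy].
  by rewrite (margY_nonadjacent miy xy) mulr_sumr.
rewrite exchange_big /=; apply: ler_sum => x' _.
by rewrite -mulr_sumr Q_margX.
Qed.

Lemma H2_sum_gt0 : 0 < \sum_x \sum_(y | max_indep e y && (x \in y)) P x * \sum_z Q z y.
Proof.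
have PQ_ge0 x y : max_indep e y -> 0 <= P x * \sum_z Q z y.
  move=> miy; apply: mulr_ge0; first by rewrite -Q_margX sumr_ge0.
  by apply: sumr_ge0 => ? _.
have Q_sum_ge0 x : 0 <= \sum_(y | max_indep e y && (x \in y)) Q x y.
  by apply: sumr_ge0 => ? _.
have mass_neq0 : \sum_x \sum_(y | max_indep e y && (x \in y)) Q x y <> 0.
  by rewrite Q_mass; exact/eqP/oner_neq0.
have [x /andP[_ /lt0r_neq0/eqP Qx_neq0]] :=
  psumr_neq0P (fun x _ => Q_sum_ge0 x) mass_neq0.
have [y /andP[/andP[miy xy] Qxy_gt0]] := psumr_neq0P (fun y _ => Q_ge0 x y) Qx_neq0.
have inner_ge0 z : 0 <= \sum_(y | max_indep e y && (z \in y)) P z * \sum_x' Q x' y.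
  by apply: sumr_ge0 => y' /andP[miy' _]; exact: PQ_ge0.
apply: (lt_le_trans _ (ler_sum_term (i := x) (fun z _ => inner_ge0 z) isT)).
apply: (lt_le_trans _ (ler_sum_term (i := y) _ _)); last 2 first.
- by move=> y' /andP[miy' _]; exact: PQ_ge0.
- exact/andP.
apply: (lt_le_trans (mulr_gt0 Qxy_gt0 Qxy_gt0)).
by rewrite ler_pM ?Q_ge0 ?Delta_le_margX ?Delta_le_margY.
Qed.

End Delta.

Local Close Scope ring_scope.
Local Open Scope R_scope.

Lemma log2_le x y : 0 < x -> x <= y -> log2 x <= log2 y.
Proof.
move=> x_gt0 le_xy; rewrite /log2 /Rdiv; apply: Rmult_le_compat_r.
  by apply/Rlt_le/Rinv_0_lt_compat/(Rlt_trans _ (/ 2)); [lra | exact: ln_lt_2].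
apply: Rnot_lt_le => /(ln_lt_inv _ _ (Rlt_le_trans _ _ _ x_gt0 le_xy) x_gt0); lra.
Qed.

Theorem proposition4 (X : finType) (e : rel X)
  (e_sym : symmetric e) (e_irr : irreflexive e)
  (P : X -> R) (hP : is_pmf P) :
  forall Q : X -> {set X} -> R, in_Delta e P Q ->
    (I2 e P <= H2_obj e P Q)%R.
Proof.
move=> Q [Q_ge0 [_ [Q_margX Q_mass]]]; have [_ P_sum1] := hP.
have Q_ge0_num x y : (0 <= Q x y)%O by apply/RleP.
have sum_gt0 := H2_sum_gt0 Q_ge0_num Q_margX Q_mass.
have sum_le := H2_sum_le_I2_sum P_sum1 Q_ge0_num Q_margX Q_mass.
apply: Ropp_le_contravar; apply: log2_le.
- exact: (elimT RltP sum_gt0).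
- exact: (elimT RleP sum_le).
Qed.
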